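(* Let $\mathfrak g=\mathfrak{sl}_3$, $\lambda_1,\lambda_2\in P^+$, and $w\in\{\mathrm{id},s_2\}$ such that $w(\lambda_1-\lambda_2)\in P^+$ and $w(\lambda_1-\lambda_2)(h_1)>0$. Let $a\in\{1,\ w(\lambda_1-\lambda_2)(h_1)\}$. Then for each $\nu\in P^+$ there exists an integer $0\le\ell\le a$ such that every $(s_{1,1},s_{1,2},s_{1,3},s_{2,2},s_{2,3})\in\mathbf T(\lambda_2)^\nu_{\lambda_1}$ satisfies $$a-\ell\le s_{1,2}\le\lambda_1(h_1)-\ell,\qquad s_{1,3}\le\lambda_1(h_2)-(a-\ell),\qquad s_{2,3}\ge a-\ell.$$
   Context: $\mathfrak g=\mathfrak{sl}_3$ with simple coroots $h_1,h_2$, fundamental weights $\omega_1,\omega_2$, simple reflections $s_1,s_2$, dominant integral weights $P^+$. For $\lambda\in P^+$, $\mathbf T(\lambda)$ is the set of $(s_{1,1},s_{1,2},s_{1,3},s_{2,2},s_{2,3})\in\mathbb Z_{\ge0}^5$ with $s_{1,1}+s_{1,2}+s_{1,3}=\lambda(h_1)+\lambda(h_2)$, $s_{2,2}+s_{2,3}=\lambda(h_2)$, $s_{1,1}\ge s_{2,2}$, $s_{1,1}+s_{1,2}\ge s_{2,2}+s_{2,3}$. For $\lambda,\mu,\nu\in P^+$, $\mathbf T(\lambda)^\nu_\mu$ is the set of elements of $\mathbf T(\lambda)$ satisfying $s_{1,2}\le\mu(h_1)$, $s_{1,3}\le\mu(h_2)$, $s_{2,3}+s_{1,3}\le\mu(h_2)+s_{1,2}$,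 $\nu(h_1)+\nu(h_2)=\mu(h_1)+\mu(h_2)+s_{1,1}-s_{1,3}-s_{2,3}$, and $\nu(h_2)=\mu(h_2)+s_{1,2}+s_{2,2}-s_{1,3}-s_{2,3}$. *)

(* integral weights of sl_3 are recorded by their values on the
   simple coroots h1, h2 (coordinates in the basis of fundamental weights). *)
From Stdlib Require Import ZArith Lia.
Open Scope Z_scope.

Record weight := mkWeight { wh1 : Z ; wh2 : Z }.

Definition dominant (mu : weight) : Prop := 0 <= wh1 mu /\ 0 <= wh2 mu.

Definition wsub (mu nu : weight) : weight :=
  mkWeight (wh1 mu - wh1 nu) (wh2 mu - wh2 nu).

(* Simple roots: alpha1 = (2,-1), alpha2 = (-1,2) on (h1,h2).
   s_i(mu) = mu - mu(h_i) alpha_i. *)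
Definition s1 (mu : weight) : weight :=
  mkWeight (wh1 mu - 2 * wh1 mu) (wh2 mu + wh1 mu).
Definition s2 (mu : weight) : weight :=
  mkWeight (wh1 mu + wh2 mu) (wh2 mu - 2 * wh2 mu).

Inductive Wsub := W_id | W_s2.
Definition wact (w : Wsub) (mu : weight) : weight :=
  match w with W_id => mu | W_s2 => s2 mu end.

Record tabl := mkTabl { s11 : nat ; s12 : nat ; s13 : nat ; s22 : nat ; s23 : nat }.

Definition inT (lam : weight) (s : tabl) : Prop :=
  let a11 := Z.of_nat (s11 s) in let a12 := Z.of_nat (s12 s) in
  let a13 := Z.of_nat (s13 s) in let a22 := Z.of_nat (s22 s) in
  let a23 := Z.of_nat (s23 s) in
  a11 + a12 + a13 = wh1 lam + wh2 lam /\
  a22 + a23 = wh2 lam /\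
  a11 >= a22 /\
  a11 + a12 >= a22 + a23.

Definition inTmn (lam mu nu : weight) (s : tabl) : Prop :=
  let a11 := Z.of_nat (s11 s) in let a12 := Z.of_nat (s12 s) in
  let a13 := Z.of_nat (s13 s) in let a22 := Z.of_nat (s22 s) in
  let a23 := Z.of_nat (s23 s) in
  inT lam s /\
  a12 <= wh1 mu /\
  a13 <= wh2 mu /\
  a23 + a13 <= wh2 mu + a12 /\
  wh1 nu + wh2 nu = wh1 mu + wh2 mu + a11 - a13 - a23 /\
  wh2 nu = wh2 mu + a12 + a22 - a13 - a23.

(* For a tableau s in T(lam2)^nu_lam1 put
     slack s := min (s12, lam1(h2) - s13, s23),
   so that the three lower bounds of the proposition say exactly
   a - l <= slack s, and the remaining bound says l <= lam1(h1) - s12.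
   Hence an admissible l is an integer lying above every a - slack s and
   below every lam1(h1) - s12', clamped to [0, a].

   The combinatorial heart is a pairwise inequality: for any two tableaux
   s, s' of T(lam2)^nu_lam1 one has a - slack s <= lam1(h1) - s12', using
   a <= w(lam1 - lam2)(h1) and the dominance of w(lam1 - lam2).  Then l is
   chosen as the largest value of a - slack s, floored at 0; such a maximum
   exists because these values are integers bounded by a (classical
   argument, the set of tableaux being given only as a predicate). *)

From Stdlib Require Import ZArith Lia Classical.
Open Scope Z_scope.

Lemma floored_max (Q : Z -> Prop) (k : Z) :
  0 <= k -> (forall z, Q z -> z <= k) ->
  exists l, 0 <= l <= k /\ (forall z, Q z -> z <= l) /\ (l = 0 \/ Q l).
Proof.
  intros Hk; pattern k; apply natlike_ind; [| | exact Hk]; clear k Hk.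
  - intros HQ. exists 0. repeat split; auto; lia.
  - intros k Hk IH HQ.
    destruct (classic (Q (Z.succ k))) as [Hq | Hq].
    + exists (Z.succ k). repeat split; auto; lia.
    + destruct IH as [l [Hl [Hub Hatt]]].
      * intros z Hz. assert (z <> Z.succ k) by (intros ->; contradiction).
        specialize (HQ z Hz). lia.
      * exists l. repeat split; auto; lia.
Qed.

Definition slack (lam1 : weight) (s : tabl) : Z :=
  Z.min (Z.of_nat (s12 s)) (Z.min (wh2 lam1 - Z.of_nat (s13 s)) (Z.of_nat (s23 s))).

(* The slack is nonnegative, since s13 <= lam1(h2) for s in T(lam2)^nu_lam1;
   so the values a - slack s never exceed a. *)
Lemma slack_nonneg (lam1 lam2 nu : weight) (s : tabl) :
  inTmn lam2 lam1 nu s -> 0 <= slack lam1 s.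
Proof.
  intros [_ [_ [Hs13 _]]]. unfold slack. repeat apply Z.min_case; lia.
Qed.

Lemma slack_bounds (lam1 : weight) (s : tabl) (b : Z) :
  b <= slack lam1 s ->
  b <= Z.of_nat (s12 s) /\ Z.of_nat (s13 s) <= wh2 lam1 - b /\ Z.of_nat (s23 s) >= b.
Proof.
  unfold slack. intros Hb.
  pose proof (Z.le_min_l (Z.of_nat (s12 s)) (Z.min (wh2 lam1 - Z.of_nat (s13 s)) (Z.of_nat (s23 s)))).
  pose proof (Z.le_min_r (Z.of_nat (s12 s)) (Z.min (wh2 lam1 - Z.of_nat (s13 s)) (Z.of_nat (s23 s)))).
  pose proof (Z.le_min_l (wh2 lam1 - Z.of_nat (s13 s)) (Z.of_nat (s23 s))).
  pose proof (Z.le_min_r (wh2 lam1 - Z.of_nat (s13 s)) (Z.of_nat (s23 s))).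
  lia.
Qed.

Lemma slack_pairwise (lam1 lam2 nu : weight) (w : Wsub) (a : Z) (s s' : tabl) :
  dominant (wact w (wsub lam1 lam2)) ->
  a <= wh1 (wact w (wsub lam1 lam2)) ->
  inTmn lam2 lam1 nu s -> inTmn lam2 lam1 nu s' ->
  a - slack lam1 s <= wh1 lam1 - Z.of_nat (s12 s').
Proof.
  destruct lam1 as [m1 m2], lam2 as [p1 p2], nu as [n1 n2], w;
  destruct s as [x11 x12 x13 x22 x23], s' as [y11 y12 y13 y22 y23];
  cbv beta iota zeta delta [slack dominant inTmn inT wact wsub s2];
  cbn [wh1 wh2 s11 s12 s13 s22 s23];
  intros; repeat apply Z.min_case; lia.
Qed.

Theorem proposition6p3 (lam1 lam2 : weight) (w : Wsub) :
  dominant lam1 -> dominant lam2 ->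
  dominant (wact w (wsub lam1 lam2)) ->
  0 < wh1 (wact w (wsub lam1 lam2)) ->
  forall a : Z, (a = 1 \/ a = wh1 (wact w (wsub lam1 lam2))) ->
  forall nu : weight, dominant nu ->
  exists l : Z, 0 <= l <= a /\
    forall s : tabl, inTmn lam2 lam1 nu s ->
      a - l <= Z.of_nat (s12 s) <= wh1 lam1 - l /\
      Z.of_nat (s13 s) <= wh2 lam1 - (a - l) /\
      Z.of_nat (s23 s) >= a - l.
Proof.
  intros _ _ Hdom Hpos a Ha nu _.
  assert (Ha_le : a <= wh1 (wact w (wsub lam1 lam2))) by lia.
  set (Lower := fun z => exists s, inTmn lam2 lam1 nu s /\ z = a - slack lam1 s).
  destruct (floored_max Lower a) as [l [Hl [Habove Hwhich]]].
  - lia.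
  - intros z [s [Hs ->]]. pose proof (slack_nonneg _ _ _ _ Hs). lia.
  - exists l. split; [exact Hl |]. intros s Hs.
    assert (Hlow : a - slack lam1 s <= l) by (apply Habove; exists s; auto).
    assert (Hup : l <= wh1 lam1 - Z.of_nat (s12 s)).
    { destruct Hwhich as [-> | [s0 [Hs0 ->]]].
      - destruct Hs as [_ [Hs12 _]]. lia.
      - exact (slack_pairwise _ _ _ _ _ _ _ Hdom Ha_le Hs0 Hs). }
    destruct (slack_bounds lam1 s (a - l)) as [H12 [H13 H23]]; [lia |].
    repeat split; lia.
Qed.
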